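(* For every $n\in\mathbb{N}$ with $n>1$, the monoid $\mathrm{lps}_n$ has exponential growth.
   Context: Let $\mathcal{A}_n=\{1<2<\cdots<n\}$. An lPS tableau is a finite (possibly empty) sequence of nonempty bottom-justified columns of boxes filled with positive integers, such that the entries of each column are strictly decreasing from top to bottom and the bottom entries of the columns form a weakly increasing sequence from left to right. Right insertion of a symbol $a$ into an lPS tableau $B$: if $a$ is greater than or equal to every entry of the bottom row, append a new column consisting of $a$ at the right end; otherwise, let $z$ be the leftmost bottom-row entry with $z>a$ and put $a$ in a new box at the bottom of the column of $z$ (the previous entries of that column move up one box). For $w=w_1\cdots w_k$, $\mathfrak{R}_\ell(w)$ is obtained by starting with the empty tableau and right-inserting $w_1,\dots,w_k$ in order. The monoid $\mathrm{lps}_n$ is the quotient of the free monoid $\mathcal{A}_n^*$ by the congruence $u\equiv v\iff\mathfrak{R}_\ell(u)=\mathfrak{R}_\ell(v)$. For a monoid $M$ generated by a finite set $\Sigma$, the growth function $\gamma_M(N)$ is the number of elements of $M$ expressible as products of at most $N$ generators; $M$ has exponential growth if $\gamma_M$ is bounded below by $k^N$ for some $k$ (up to the usual equivalence of growth functions: $f\preceq g$ iff $f(N)\le g(cN)$ for some constant $c>0$ and all large $N$), a notion independent of the finite generating set. *)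

From mathcomp Require Import all_boot all_order all_algebra.
From mathcomp Require Import reals.

Set Implicit Arguments.
Unset Strict Implicit.
Unset Printing Implicit Defensive.

(* An lPS tableau is a sequence of columns (left to right); each column is
   stored as a list read from BOTTOM to TOP, so [head 0 c] is the bottom entry
   of column c. *)
Definition column := seq nat.
Definition tableau := seq column.

Fixpoint rins (B : tableau) (a : nat) : tableau :=
  match B with
  | [::] => [:: [:: a]]
  | c :: B' => if a < head 0 c then (a :: c) :: B' else c :: rins B' a
  end.

Definition Rl (w : seq nat) : tableau := foldl rins [::] w.

Fixpoint words (n k : nat) : seq (seq nat) :=
  match k with
  | 0 => [:: [::]]
  | k'.+1 => [seq a :: w | a <- iota 1 n, w <- words n k']
  end.

Definition words_le (n N : nat) : seq (seq nat) :=
  flatten [seq words n k | k <- iota 0 N.+1].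

(* Growth function of lps_n w.r.t. the generating set A_n: the number of
   elements of lps_n = A_n^* / ==, (u == v iff Rl u = Rl v), that are
   products of at most N generators; since the classes are in bijection with
   the tableaux Rl w, this is the number of distinct tableaux Rl w with
   |w| <= N. *)
Definition lps_growth (n N : nat) : nat := size (undup [seq Rl w | w <- words_le n N]).

Definition exponential_growth (R : realType) (gamma : nat -> nat) : Prop :=
  exists (k : R) (c N0 : nat),
    (1 < k)%R /\ (0 < c)%N /\
    forall N, (N0 <= N)%N -> (k ^+ N <= (gamma (c * N)%N)%:R)%R.

From mathcomp Require Import all_boot all_order all_algebra.
From mathcomp Require Import reals.

(* Encode a bit b by the word [1] (b = false) or [2; 1] (b = true).  As long
   as every bottom entry is 1, inserting 1 or 2 opens a new column at the
   right end, and a 1 inserted right after a 2 slides under that new column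
   [2].  Hence the word encoding a bit string of length N has length at most
   2N and its tableau is the sequence of columns [1] and [1; 2] spelling out
   the bits, so there are at least 2^N elements of length at most 2N. *)

Set Implicit Arguments.
Unset Strict Implicit.
Unset Printing Implicit Defensive.
Import GRing.Theory Num.Theory.

Definition bottoms_le (a : nat) (B : tableau) : bool :=
  all (fun c => head 0 c <= a) B.

Lemma rins_append (B : tableau) (a : nat) :
  bottoms_le a B -> rins B a = rcons B [:: a].
Proof.
elim: B => [|c B IH] //= /andP[le_ca le_Ba].
by rewrite ltnNge le_ca /= IH.
Qed.

Lemma rins_under_last (B : tableau) (a b : nat) :
  bottoms_le a B -> a < b -> rins (rcons B [:: b]) a = rcons B [:: a; b].
Proof.
move=> le_Ba lt_ab; elim: B le_Ba => [|c B IH] /=; first by rewrite lt_ab.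
by case/andP=> le_ca le_Ba; rewrite ltnNge le_ca /= IH.
Qed.

Definition bit_block (b : bool) : seq nat := if b then [:: 2; 1] else [:: 1].

Definition bit_column (b : bool) : column := if b then [:: 1; 2] else [:: 1].

Definition bits_word (bs : seq bool) : seq nat := flatten (map bit_block bs).

Lemma bit_column_inj : injective bit_column.
Proof. by case; case. Qed.

Lemma foldl_rins_bit_block (B : tableau) (b : bool) :
  bottoms_le 1 B -> foldl rins B (bit_block b) = rcons B (bit_column b).
Proof.
move=> le_B1; case: b => /=; last by rewrite rins_append.
rewrite [rins B 2]rins_append ?rins_under_last //.
by apply: sub_all le_B1 => c /leq_trans; apply.
Qed.

Lemma foldl_rins_bits_word (B : tableau) (bs : seq bool) :
  bottoms_le 1 B -> foldl rins B (bits_word bs) = B ++ map bit_column bs.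
Proof.
elim: bs B => [|b bs IH] B le_B1 /=; first by rewrite cats0.
rewrite foldl_cat foldl_rins_bit_block // IH ?cat_rcons //.
by move: le_B1; rewrite /bottoms_le all_rcons => ->; case: b.
Qed.

Lemma Rl_bits_word (bs : seq bool) : Rl (bits_word bs) = map bit_column bs.
Proof. exact: foldl_rins_bits_word. Qed.

Lemma size_bits_word (bs : seq bool) : size (bits_word bs) <= 2 * size bs.
Proof.
elim: bs => [|b bs IH] //=; rewrite size_cat mulnS.
by apply: leq_add => //; case: b.
Qed.

Lemma bits_word_letters (n : nat) (bs : seq bool) :
  1 < n -> all (fun a => 0 < a <= n) (bits_word bs).
Proof.
move=> lt1n; elim: bs => [|b bs IH] //=.
by rewrite all_cat IH andbT; case: b => /=; rewrite ?lt1n (ltnW lt1n).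
Qed.

Lemma mem_words (n : nat) (w : seq nat) :
  all (fun a => 0 < a <= n) w -> w \in words n (size w).
Proof.
elim: w => [|a w IH] //= /andP[a_n w_n].
by apply: (allpairs_f (fun a w => a :: w)); rewrite ?mem_iota ?add1n ?ltnS ?IH.
Qed.

Lemma mem_words_le (n N : nat) (w : seq nat) :
  size w <= N -> all (fun a => 0 < a <= n) w -> w \in words_le n N.
Proof.
move=> le_wN w_n; apply/flatten_mapP; exists (size w); last exact: mem_words.
by rewrite mem_iota add0n ltnS.
Qed.

Lemma lps_growth_ge_pow2 (n N : nat) : 1 < n -> 2 ^ N <= lps_growth n (2 * N).
Proof.
move=> lt1n.
pose tableaux := [seq map bit_column (tval t) | t <- enum {: N.-tuple bool}].
have uniq_tableaux : uniq tableaux.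
  rewrite map_inj_uniq ?enum_uniq // => t1 t2 /(inj_map bit_column_inj).
  exact: val_inj.
have -> : 2 ^ N = size tableaux by rewrite size_map -cardE card_tuple card_bool.
apply: uniq_leq_size => // _ /mapP[t _ ->].
rewrite mem_undup; apply/mapP; exists (bits_word t); last by rewrite Rl_bits_word.
apply: mem_words_le; last exact: bits_word_letters.
by have := size_bits_word t; rewrite size_tuple.
Qed.

Theorem corollary4p2 (R : realType) (n : nat) :
  (1 < n)%N -> exponential_growth R (lps_growth n).
Proof.
move=> lt1n; exists 2%:R%R, 2, 0; split; first by rewrite ltr1n.
split=> // N _.
by rewrite -natrX ler_nat lps_growth_ge_pow2.
Qed.
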